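(* Let $\alpha=(\alpha_1,\dots,\alpha_L)$ be a weak composition, $n$ a positive integer and $B\in\mathrm{GMLQ}(\alpha,n)$ with labelling $L_G(B)$. Then: (i) within each row of $L_G(B)$, the largest label of an anti-particle is strictly smaller than the smallest label of a particle; (ii) if $\alpha_1\ge\alpha_2\ge\cdots\ge\alpha_L$, then the labels of the particles in $L_G(B)$ coincide with the Ferrari–Martin labels of $B$, and for each $1\le r\le L$ every anti-particle in row $r$ of $L_G(B)$ has label $r-1$.
   Context: $\mathrm{GMLQ}(\alpha,n)$ is the set of tuples $B=(B_1,\dots,B_L)$ of subsets of $[n]$ with $|B_j|=\alpha_j$, drawn with rows $1..L$ bottom to top and columns $1..n$ left to right; cells $(r,j)$ with $j\in B_r$ are particles (balls), the others anti-particles. Labelling $L_G(B)$: row $L$: particles get label $L$, anti-particles $L-1$. For $r=L-1,\dots,1$: with $w_1,\dots,w_n$ the labels of row $r+1$, order the columns $i_1,\dots,i_n$ so that $w_{i_1}\ge\cdots\ge w_{i_n}$, ties by increasing column index; let $s=|B_r|$. Particle phase: for $k=1,\dots,s$, the first unlabelled particle of row $r$ weakly to the right of column $i_k$ cyclically ($i_k,i_k+1,\dots,n,1,\dots$) gets label $w_{i_k}$. Anti-particle phase: for $k=n,n-1,\dots,s+1$, the first unlabelled anti-particle of row $r$ weakly to the left of column $i_k$ cyclically ($i_k,i_k-1,\dots,1,n,\dots$) gets label $w_{i_k}-1$. Ferrari–Martin labels (for $\alpha$ weakly decreasing): for $r=L,\dots,2$, every unlabelled ball of row $r$ gets label $r$;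 then the balls of row $r$, in decreasing label order (left to right among ties), are each paired with the first unlabelled ball of row $r-1$ weakly to the right cyclically modulo $n$, which gets the same label; finally unlabelled balls of row 1 get label 1. *)

(* Columns of [n] are encoded as the nats 0..n-1
   (column c of the paper is c-1 here); rows are numbered 1..L as in the paper. *)
From mathcomp Require Import all_boot.
Set Implicit Arguments. Unset Strict Implicit. Unset Printing Implicit Defensive.

Section Defs.
Variable n : nat.

Definition Brow (B : seq {set 'I_n}) (r : nat) : {set 'I_n} := nth set0 B r.-1.

Definition isp (S : {set 'I_n}) (j : nat) : bool := [exists x in S, val x == j].

Definition inGMLQ (alpha : seq nat) (B : seq {set 'I_n}) : Prop :=
  size B = size alpha /\
  forall i, i < size alpha -> #|nth set0 B i| = nth 0 alpha i.

Definition geq_lab (w : seq nat) (i j : nat) : bool :=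
  (nth 0 w j < nth 0 w i) || ((nth 0 w i == nth 0 w j) && (i <= j)).

Definition cyc_right (i t : nat) : nat := (i + t) %% n.
Definition cyc_left (i t : nat) : nat := (i + n - t) %% n.

Definition place (dir : nat -> nat -> nat) (P : pred nat)
    (lab : seq (option nat)) (i v : nat) : seq (option nat) :=
  let t := find (fun t => P (dir i t) && (nth None lab (dir i t) == None)) (iota 0 n) in
  if t < n then set_nth None lab (dir i t) (Some v) else lab.

(* one step of the labelling L_G: from labels w of row r+1 to labels of row r,
   whose particle set is S *)
Definition LG_step (w : seq nat) (S : {set 'I_n}) : seq nat :=
  let ord := sort (geq_lab w) (iota 0 n) in
  let s := #|S| in
  let lab1 := foldl (fun lab i => place cyc_right (isp S) lab i (nth 0 w i))
                    (nseq n None) (take s ord) in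
  let lab2 := foldl (fun lab i => place cyc_left (fun c => ~~ isp S c) lab i (nth 0 w i - 1))
                    lab1 (rev (drop s ord)) in
  map (odflt 0) lab2.

(* labels of row L - d in L_G(B) *)
Fixpoint LGd (B : seq {set 'I_n}) (d : nat) : seq nat :=
  match d with
  | 0 => [seq if isp (Brow B (size B)) j then size B else (size B).-1 | j <- iota 0 n]
  | d'.+1 => LG_step (LGd B d') (Brow B (size B - d'.+1))
  end.

Definition LGlab (B : seq {set 'I_n}) (r j : nat) : nat := nth 0 (LGd B (size B - r)) j.

(* one step of Ferrari--Martin labelling: w = labels of the balls of row r
   (particle set Sr), Sb = particle set of row r-1 = rb.  Entries at anti-particle cells are
   irrelevant (set to rb). *)
Definition FM_step (w : seq nat) (Sr Sb : {set 'I_n}) (rb : nat) : seq nat :=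
  let balls := sort (geq_lab w) [seq j <- iota 0 n | isp Sr j] in
  let lab := foldl (fun lab i => place cyc_right (isp Sb) lab i (nth 0 w i))
                   (nseq n None) balls in
  map (odflt rb) lab.

(* Ferrari--Martin labels of row L - d *)
Fixpoint FMd (B : seq {set 'I_n}) (d : nat) : seq nat :=
  match d with
  | 0 => nseq n (size B)
  | d'.+1 => FM_step (FMd B d') (Brow B (size B - d')) (Brow B (size B - d'.+1))
                     (size B - d'.+1)
  end.

Definition FMlab (B : seq {set 'I_n}) (r j : nat) : nat := nth 0 (FMd B (size B - r)) j.

End Defs.

From mathcomp Require Import all_boot zify.
Set Implicit Arguments. Unset Strict Implicit. Unset Printing Implicit Defensive.

(* In one step of L_G, a particle receives the label w_i of a column i among the first
   s = |B_r| columns of the decreasing order of the labels w above, and an anti-particle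
   receives w_i - 1 for a column i among the remaining ones. Hence every anti-particle label
   is strictly below every particle label as soon as all labels above are positive, which
   holds since, by induction down the rows, the labels of row r are at least r - 1.

   For weakly decreasing alpha, assume row r+1 carries its Ferrari-Martin labels (all > r)
   on particles and r on anti-particles. Then the decreasing order lists the particles in
   Ferrari-Martin order followed by the anti-particles from left to right. As row r has at
   least as many particles as row r+1, the particle phase of L_G first performs exactly the
   Ferrari-Martin pairing and then gives the remaining balls label r, the Ferrari-Martin
   default; the anti-particles only meet columns labelled r and so get r - 1. *)

Section Placement.
Variable n : nat.
Hypothesis n_gt0 : 0 < n.
Implicit Types (dir : nat -> nat -> nat) (P : pred nat) (lab : seq (option nat)).
Implicit Types (f g : nat -> nat) (xs : seq nat).

Definition scans (dir : nat -> nat -> nat) : Prop :=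
  forall i, (forall t, dir i t < n) /\ (forall c, c < n -> exists2 t, t < n & dir i t = c).

Lemma scans_cyc_right : scans (cyc_right n).
Proof.
move=> i; split=> [t|c cn]; first by rewrite ltn_mod.
exists ((c + (n - i %% n)) %% n); first by rewrite ltn_mod.
have i_lt : i %% n < n by rewrite ltn_mod.
rewrite /cyc_right modnDmr -modnDml addnA (_ : i %% n + c + (n - i %% n) = c + n); last by lia.
by rewrite modnDr modn_small.
Qed.

Lemma scans_cyc_left : scans (cyc_left n).
Proof.
move=> i; split=> [t|c cn]; first by rewrite ltn_mod.
exists ((i + n - c) %% n); first by rewrite ltn_mod.
have t_lt : (i + n - c) %% n < n by rewrite ltn_mod.
have := divn_eq (i + n - c) n; set q := (i + n - c) %/ n; set t := (i + n - c) %% n => e.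
by rewrite /cyc_left (_ : i + n - t = q * n + c) ?modnMDl ?modn_small //; lia.
Qed.

Definition vacant (P : pred nat) (lab : seq (option nat)) (c : nat) : bool :=
  P c && (nth None lab c == None).

Definition nvacant (P : pred nat) (lab : seq (option nat)) : nat :=
  count (vacant P lab) (iota 0 n).

Definition fill (dir : nat -> nat -> nat) (P : pred nat) (f : nat -> nat)
    (lab : seq (option nat)) (xs : seq nat) : seq (option nat) :=
  foldl (fun lab i => place n dir P lab i (f i)) lab xs.

Lemma vacant_set_nth P lab c0 v c :
  vacant P (set_nth None lab c0 (Some v)) c = (c != c0) && vacant P lab c.
Proof. by rewrite /vacant nth_set_nth /=; case: (eqVneq c c0); rewrite ?andbF. Qed.

Lemma nvacant_set_nth P lab c0 v : c0 < n -> vacant P lab c0 ->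
  nvacant P lab = (nvacant P (set_nth None lab c0 (Some v))).+1.
Proof.
move=> c0n vac0; have one_c0 : count (pred1 c0) (iota 0 n) = 1.
  by rewrite count_uniq_mem ?iota_uniq // mem_iota c0n.
rewrite /nvacant -addn1 -one_c0 -count_predUI -[LHS]addn0; congr (_ + _).
  apply: eq_count => c /=; rewrite vacant_set_nth.
  by case: (eqVneq c c0) => [->|] /=; rewrite ?eqxx ?vac0 ?orbT ?orbF.
rewrite (@eq_count _ _ pred0) ?count_pred0 // => c /=.
by rewrite vacant_set_nth; case: eqP; rewrite ?andbF.
Qed.

Lemma place_cases dir P lab i v :
  place n dir P lab i v = lab \/
  exists2 c0, vacant P lab c0 & place n dir P lab i v = set_nth None lab c0 (Some v).
Proof.
rewrite /place; set q := (X in find X _); case: ifP => [find_lt|_]; [right | by left].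
have has_q : has q (iota 0 n) by rewrite has_find size_iota.
by exists (dir i (find q (iota 0 n))) => //; have := nth_find 0 has_q; rewrite nth_iota.
Qed.

Lemma place_vacant dir P lab i v : scans dir -> 0 < nvacant P lab ->
  exists c0, [/\ c0 < n, vacant P lab c0 & place n dir P lab i v = set_nth None lab c0 (Some v)].
Proof.
move=> /(_ i)[dir_lt dir_onto]; rewrite /nvacant -has_count => /hasP[c].
rewrite mem_iota add0n => /andP[_ cn] vac_c.
have [t0 t0n dirt0] := dir_onto c cn.
rewrite /place; set q := (X in find X _).
have has_q : has q (iota 0 n) by apply/hasP; exists t0; rewrite ?mem_iota // /q dirt0.
have find_lt : find q (iota 0 n) < n by rewrite -{2}(size_iota 0 n) -has_find.
have := nth_find 0 has_q; rewrite nth_iota // add0n => vac.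
by exists (dir i (find q (iota 0 n))); rewrite find_lt.
Qed.

Lemma size_fill dir P f lab xs : scans dir -> size lab = n -> size (fill dir P f lab xs) = n.
Proof.
move=> sc; elim: xs lab => //= x xs IH lab size_lab; apply: IH; rewrite /place.
case: ifP => // _; rewrite size_set_nth size_lab; apply/maxn_idPr; exact: (sc x).1.
Qed.

Lemma fill_keep dir P f lab xs c :
  ~~ vacant P lab c -> nth None (fill dir P f lab xs) c = nth None lab c.
Proof.
elim: xs lab => //= x xs IH lab nvac_c.
have [-> | [c0 vac0 ->]] := place_cases dir P lab x (f x); first exact: IH.
have ne : c != c0 by apply: contraNneq nvac_c => ->.
transitivity (nth None (set_nth None lab c0 (Some (f x))) c).
  by apply: IH; rewrite vacant_set_nth negb_and nvac_c orbT.
by rewrite nth_set_nth /= (negbTE ne).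
Qed.

Lemma fill_vacant dir P f lab xs c : vacant P lab c ->
  nth None (fill dir P f lab xs) c = None \/
  exists2 i, i \in xs & nth None (fill dir P f lab xs) c = Some (f i).
Proof.
elim: xs lab => [|x xs IH] lab vac_c /=; first by left; apply/eqP; case/andP: vac_c.
have [-> | [c0 vac0 ->]] := place_cases dir P lab x (f x).
  by have [|[i ixs]] := IH lab vac_c; [left | right; exists i; rewrite ?inE ?ixs ?orbT].
case: (eqVneq c c0) => [-> | ne].
  right; exists x; first exact: mem_head.
  rewrite [LHS](@fill_keep dir P f) ?vacant_set_nth ?eqxx //.
  by rewrite nth_set_nth /= eqxx.
have vac_c' : vacant P (set_nth None lab c0 (Some (f x))) c by rewrite vacant_set_nth ne.
by have [|[i ixs]] := IH _ vac_c'; [left | right; exists i; rewrite ?inE ?ixs ?orbT].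
Qed.

Lemma nvacant_fill dir P f lab xs : scans dir -> size xs <= nvacant P lab ->
  nvacant P (fill dir P f lab xs) = nvacant P lab - size xs.
Proof.
move=> sc; elim: xs lab => [|x xs IH] lab /= size_xs; first by rewrite subn0.
have [c0 [c0n vac0 ->]] := place_vacant x (f x) sc (leq_ltn_trans (leq0n _) size_xs).
rewrite (nvacant_set_nth (f x) c0n vac0) subSS in size_xs *; exact: IH.
Qed.

Lemma fill_complete dir P f lab xs c : scans dir -> size xs = nvacant P lab ->
  c < n -> vacant P lab c -> exists2 i, i \in xs & nth None (fill dir P f lab xs) c = Some (f i).
Proof.
move=> sc size_xs cn vac_c; have [res_c|//] := fill_vacant dir f xs vac_c.
have : has (vacant P (fill dir P f lab xs)) (iota 0 n).
  by apply/hasP; exists c; rewrite ?mem_iota //= /vacant res_c eqxx andbT; case/andP: vac_c.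
by rewrite has_count -/(nvacant _ _) nvacant_fill ?size_xs ?subnn.
Qed.

Lemma nvacant_count P lab : (forall c, c < n -> P c -> nth None lab c = None) ->
  nvacant P lab = count P (iota 0 n).
Proof.
move=> lab_none; apply: eq_in_count => c; rewrite mem_iota add0n => /andP[_ cn] /=.
by rewrite /vacant; case Pc: (P c); rewrite //= lab_none.
Qed.

Lemma nvacant_nseq P : nvacant P (nseq n None) = count P (iota 0 n).
Proof. by apply: nvacant_count => c cn _; rewrite nth_nseq cn. Qed.

Lemma eq_in_fill dir P f g lab xs : {in xs, f =1 g} -> fill dir P f lab xs = fill dir P g lab xs.
Proof.
elim: xs lab => //= x xs IH lab fg; rewrite /fill /= fg ?mem_head //; apply: IH => y y_xs.
by apply: fg; rewrite inE y_xs orbT.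
Qed.
End Placement.

Lemma count_isp n (S : {set 'I_n}) : count (isp S) (iota 0 n) = #|S|.
Proof.
rewrite -val_enum_ord count_map enumT cardE /enum_mem size_filter.
apply: eq_count => x /=; rewrite /isp; apply/existsP/idP => [[y /andP[yS /eqP /val_inj <-]] //|xS].
by exists x; rewrite xS eqxx.
Qed.

Lemma count_predC_isp n (S : {set 'I_n}) : count (predC (isp S)) (iota 0 n) = n - #|S|.
Proof. by rewrite -(count_isp S) -[X in X - _](size_iota 0) -(count_predC (isp S)) addKn. Qed.

Lemma card_le_ord n (S : {set 'I_n}) : #|S| <= n.
Proof. by rewrite -[X in _ <= X](card_ord n) max_card. Qed.

Section GeqLab.
Variable w : seq nat.

Lemma geq_lab_total : total (geq_lab w).
Proof. by move=> i j; rewrite /geq_lab; lia. Qed.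

Lemma geq_lab_trans : transitive (geq_lab w).
Proof. by move=> j i k; rewrite /geq_lab; lia. Qed.

Lemma geq_lab_anti : antisymmetric (geq_lab w).
Proof. by move=> i j; rewrite /geq_lab => h; apply/eqP; move: h; lia. Qed.

Lemma geq_lab_le i j : geq_lab w i j -> nth 0 w j <= nth 0 w i.
Proof. by rewrite /geq_lab; lia. Qed.

End GeqLab.

Lemma sort_take_drop (T : eqType) (leT : rel T) s k x y : total leT -> transitive leT ->
  x \in take k (sort leT s) -> y \in drop k (sort leT s) -> leT x y.
Proof.
move=> leT_total leT_tr; have := sort_sorted leT_total s.
rewrite sorted_pairwise // -[X in pairwise _ X](cat_take_drop k) pairwise_cat.
by case/and3P => /allrelP + _ _; apply.
Qed.

Lemma sort_geq_lab_eq_in w w' s : {in s, forall i, nth 0 w i = nth 0 w' i} ->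
  sort (geq_lab w) s = sort (geq_lab w') s.
Proof.
move=> ww'; apply: (sorted_eq (@geq_lab_trans w') (@geq_lab_anti w')).
- rewrite -(@eq_in_sorted _ (mem s) (geq_lab w)); first by apply: sort_sorted; exact: geq_lab_total.
    by move=> i j /ww' wi /ww' wj; rewrite /geq_lab wi wj.
  by apply/allP => i; rewrite mem_sort.
- by apply: sort_sorted; exact: geq_lab_total.
- by rewrite perm_sort perm_sym perm_sort.
Qed.

Lemma sort_geq_lab_split n w (p : pred nat) v :
  (forall c, c < n -> p c -> v < nth 0 w c) -> (forall c, c < n -> ~~ p c -> nth 0 w c = v) ->
  sort (geq_lab w) (iota 0 n) =
  sort (geq_lab w) (filter p (iota 0 n)) ++ filter (predC p) (iota 0 n).
Proof.
move=> w_gt w_eq; apply: (sorted_eq (@geq_lab_trans w) (@geq_lab_anti w)).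
- by apply: sort_sorted; exact: geq_lab_total.
- rewrite sorted_pairwise ?pairwise_cat; last exact: geq_lab_trans.
  apply/and3P; split.
  + apply/allrelP => i j; rewrite mem_sort !mem_filter !mem_iota /= !add0n.
    by move=> /andP[pi i_lt] /andP[npj j_lt]; rewrite /geq_lab w_eq ?w_gt.
  + by rewrite -sorted_pairwise ?sort_sorted //; [exact: geq_lab_total | exact: geq_lab_trans].
  + have := sorted_filter (@leq_trans) (predC p) (iota_sorted 0 n).
    rewrite sorted_pairwise; last exact: leq_trans.
    apply: (sub_in_pairwise (P := [pred c | ~~ p c && (c < n)])); last first.
      by apply/allP => c; rewrite mem_filter mem_iota.
    by move=> i j /andP[npi i_lt] /andP[npj j_lt] ij; rewrite /geq_lab !w_eq // eqxx ij orbT.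
- by rewrite perm_sort -(perm_filterC p) perm_cat2r perm_sym perm_sort.
Qed.

Section LGStep.
Variables (n : nat) (w : seq nat) (S : {set 'I_n}).
Hypothesis n_gt0 : 0 < n.

Let ord := sort (geq_lab w) (iota 0 n).

Let ord_lt i : i \in ord -> i < n.
Proof. by rewrite mem_sort mem_iota. Qed.

Definition LG_particle_phase : seq (option nat) :=
  fill n (cyc_right n) (isp S) (nth 0 w) (nseq n None) (take #|S| ord).

Lemma LG_stepE : LG_step w S = map (odflt 0)
  (fill n (cyc_left n) (predC (isp S)) (fun i => nth 0 w i - 1)
        LG_particle_phase (rev (drop #|S| ord))).
Proof. by []. Qed.

Lemma LG_particle_phase_particle c : c < n -> isp S c ->
  exists2 i, i \in take #|S| ord & nth None LG_particle_phase c = Some (nth 0 w i).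
Proof.
move=> cn Sc; apply: fill_complete => //; first exact: scans_cyc_right.
  by rewrite nvacant_nseq count_isp size_takel // size_sort size_iota card_le_ord.
by rewrite /vacant Sc nth_nseq cn.
Qed.

Lemma LG_particle_phase_antiparticle c : ~~ isp S c -> nth None LG_particle_phase c = None.
Proof. by move=> nSc; rewrite fill_keep ?nth_nseq ?if_same // /vacant (negbTE nSc). Qed.

Lemma size_LG_particle_phase : size LG_particle_phase = n.
Proof. by rewrite size_fill ?size_nseq //; exact: scans_cyc_right. Qed.

Lemma LG_step_particle c : c < n -> isp S c ->
  nth 0 (LG_step w S) c = odflt 0 (nth None LG_particle_phase c).
Proof.
move=> cn Sc; rewrite LG_stepE (nth_map None); last first.
  by rewrite size_fill ?size_LG_particle_phase //; exact: scans_cyc_left.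
by rewrite fill_keep // /vacant /= Sc.
Qed.

Lemma LG_step_antiparticle c : c < n -> ~~ isp S c ->
  exists2 i, i \in drop #|S| ord & nth 0 (LG_step w S) c = nth 0 w i - 1.
Proof.
move=> cn nSc; rewrite LG_stepE (nth_map None); last first.
  by rewrite size_fill ?size_LG_particle_phase //; exact: scans_cyc_left.
have size_drop_ord : size (rev (drop #|S| ord)) = nvacant n (predC (isp S)) LG_particle_phase.
  rewrite size_rev size_drop size_sort size_iota nvacant_count ?count_predC_isp //.
  by move=> c' _; exact: LG_particle_phase_antiparticle.
have vac_c : vacant (predC (isp S)) LG_particle_phase c.
  by rewrite /vacant /= nSc LG_particle_phase_antiparticle.
have [i] := fill_complete (fun i => nth 0 w i - 1) (scans_cyc_left n_gt0) size_drop_ord cn vac_c.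
by rewrite mem_rev => i_drop ->; exists i.
Qed.

Lemma LG_step_bounds m c : (forall i, i < n -> m <= nth 0 w i) -> c < n ->
  m.-1 <= nth 0 (LG_step w S) c /\ (isp S c -> m <= nth 0 (LG_step w S) c).
Proof.
move=> w_ge cn; case: (boolP (isp S c)) => Sc.
  have [i /mem_take /ord_lt i_lt] := LG_particle_phase_particle cn Sc.
  rewrite LG_step_particle // => -> /=; have := w_ge i i_lt; split=> //; lia.
have [i /mem_drop /ord_lt i_lt ->] := LG_step_antiparticle cn Sc.
by have := w_ge i i_lt; split=> //; lia.
Qed.

Lemma LG_step_antiparticle_lt_particle j j' : (forall i, i < n -> 0 < nth 0 w i) ->
  j < n -> j' < n -> ~~ isp S j -> isp S j' -> nth 0 (LG_step w S) j < nth 0 (LG_step w S) j'.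
Proof.
move=> w_gt0 jn j'n nSj Sj'.
have [i i_drop ->] := LG_step_antiparticle jn nSj.
have [i' i'_take] := LG_particle_phase_particle j'n Sj'.
rewrite LG_step_particle // => -> /=.
have := geq_lab_le (sort_take_drop (@geq_lab_total w) (@geq_lab_trans w) i'_take i_drop).
by have := w_gt0 i (ord_lt (mem_drop i_drop)); lia.
Qed.

End LGStep.

Lemma FM_stepE n w (Sr Sb : {set 'I_n}) rb : FM_step w Sr Sb rb = map (odflt rb)
  (fill n (cyc_right n) (isp Sb) (nth 0 w) (nseq n None)
        (sort (geq_lab w) (filter (isp Sr) (iota 0 n)))).
Proof. by []. Qed.

Lemma eq_FM_step n w w' (Sr Sb : {set 'I_n}) rb :
  (forall c, c < n -> isp Sr c -> nth 0 w c = nth 0 w' c) ->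
  FM_step w Sr Sb rb = FM_step w' Sr Sb rb.
Proof.
move=> ww'; have ww'_in : {in filter (isp Sr) (iota 0 n), forall i, nth 0 w i = nth 0 w' i}.
  by move=> i; rewrite mem_filter mem_iota /= add0n => /andP[Si i_lt]; exact: ww'.
rewrite !FM_stepE (sort_geq_lab_eq_in ww'_in) (@eq_in_fill _ _ _ _ (nth 0 w')) // => i.
by rewrite mem_sort; exact: ww'_in.
Qed.

Section LGFM.
Variables (n : nat) (w : seq nat) (Sr Sb : {set 'I_n}) (r : nat).
Hypotheses (n_gt0 : 0 < n) (card_Sr_Sb : #|Sr| <= #|Sb|).
Hypothesis w_particle : forall c, c < n -> isp Sr c -> r < nth 0 w c.
Hypothesis w_antiparticle : forall c, c < n -> ~~ isp Sr c -> nth 0 w c = r.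

Let Ps := sort (geq_lab w) (filter (isp Sr) (iota 0 n)).
Let As := filter (predC (isp Sr)) (iota 0 n).
Let k := #|Sb| - #|Sr|.

Let size_Ps : size Ps = #|Sr|.
Proof. by rewrite size_sort size_filter count_isp. Qed.

Let w_As i : i \in As -> nth 0 w i = r.
Proof. by rewrite mem_filter mem_iota /= add0n => /andP[nSi i_lt]; exact: w_antiparticle. Qed.

Let ordE : sort (geq_lab w) (iota 0 n) = Ps ++ As.
Proof. exact: sort_geq_lab_split w_particle w_antiparticle. Qed.

Lemma LG_step_FM_step_particle c : c < n -> isp Sb c ->
  nth 0 (LG_step w Sb) c = nth 0 (FM_step w Sr Sb r) c.
Proof.
move=> cn Sbc; rewrite LG_step_particle // FM_stepE (nth_map None); last first.
  by rewrite size_fill ?size_nseq //; exact: scans_cyc_right.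
set labF := fill n (cyc_right n) (isp Sb) (nth 0 w) (nseq n None) Ps.
have -> : LG_particle_phase w Sb = fill n (cyc_right n) (isp Sb) (nth 0 w) labF (take k As).
  by rewrite /LG_particle_phase ordE take_cat size_Ps ltnNge card_Sr_Sb /= /fill foldl_cat.
case labF_c: (nth None labF c) => [v|] /=.
  by rewrite fill_keep ?labF_c // /vacant labF_c andbF.
have size_take_As : size (take k As) = nvacant n (isp Sb) labF.
  rewrite nvacant_fill ?nvacant_nseq ?count_isp ?size_Ps //; last exact: scans_cyc_right.
  by rewrite size_takel // size_filter count_predC_isp leq_sub2r ?card_le_ord.
have vac_c : vacant (isp Sb) labF c by rewrite /vacant Sbc labF_c.
have [i /mem_take i_As ->] := fill_complete (nth 0 w) (scans_cyc_right n_gt0) size_take_As cn vac_c.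
by rewrite /= w_As.
Qed.

Lemma LG_step_FM_step_antiparticle c : c < n -> ~~ isp Sb c -> nth 0 (LG_step w Sb) c = r.-1.
Proof.
move=> cn nSbc; have [i] := LG_step_antiparticle w n_gt0 cn nSbc.
rewrite ordE drop_cat size_Ps ltnNge card_Sr_Sb /= => /mem_drop i_As ->.
by rewrite w_As ?subn1.
Qed.

End LGFM.

Lemma row_ind (L : nat) (P : nat -> Prop) :
  P L -> (forall r, 0 < r < L -> P r.+1 -> P r) -> forall r, 0 < r <= L -> P r.
Proof.
move=> PL IH r /andP[r_gt0 r_le]; move Ek: (L - r) => k.
elim: k r Ek r_gt0 r_le => [|k IHk] r Ek r_gt0 r_le; first by have -> : r = L by lia.
by apply: IH; [lia | apply: IHk; lia].
Qed.

Section Rows.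
Variables (n : nat) (B : seq {set 'I_n}).
Hypothesis n_gt0 : 0 < n.

Lemma LGlab_top c : c < n ->
  LGlab B (size B) c = if isp (Brow B (size B)) c then size B else (size B).-1.
Proof. by move=> cn; rewrite /LGlab subnn /= (nth_map 0) ?size_iota // nth_iota. Qed.

Lemma FMlab_top c : c < n -> FMlab B (size B) c = size B.
Proof. by move=> cn; rewrite /FMlab subnn /= nth_nseq cn. Qed.

Lemma LGd_below r : 0 < r < size B ->
  LGd B (size B - r) = LG_step (LGd B (size B - r.+1)) (Brow B r).
Proof.
move=> /andP[r_gt0 r_lt]; have -> : size B - r = (size B - r.+1).+1 by lia.
by cbn [LGd]; have -> : size B - (size B - r.+1).+1 = r by lia.
Qed.

Lemma FMd_below r : 0 < r < size B ->
  FMd B (size B - r) = FM_step (FMd B (size B - r.+1)) (Brow B r.+1) (Brow B r) r.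
Proof.
move=> /andP[r_gt0 r_lt]; have -> : size B - r = (size B - r.+1).+1 by lia.
cbn [FMd]; have -> : size B - (size B - r.+1) = r.+1 by lia.
by have -> : size B - (size B - r.+1).+1 = r by lia.
Qed.

Lemma LGlab_bounds : forall r, 0 < r <= size B -> forall c, c < n ->
  r.-1 <= LGlab B r c /\ (isp (Brow B r) c -> r <= LGlab B r c).
Proof.
apply: row_ind => [c cn | r r_range IH c cn].
  by rewrite LGlab_top //; case: ifP => [_ | nSc]; split=> //; exact: leq_pred.
rewrite /LGlab LGd_below //; apply: LG_step_bounds => // i i_lt; exact: (IH i i_lt).1.
Qed.

Lemma LGlab_antiparticle_lt_particle r j j' : 0 < r <= size B -> j < n -> j' < n ->
  ~~ isp (Brow B r) j -> isp (Brow B r) j' -> LGlab B r j < LGlab B r j'.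
Proof.
move=> /andP[r_gt0]; rewrite leq_eqVlt => /orP[/eqP r_top | r_lt] jn j'n nSj Sj'.
  move: r_gt0 nSj Sj'; rewrite r_top => B_gt0 nSj Sj'.
  by rewrite !LGlab_top // (negbTE nSj) Sj' ltn_predL.
rewrite /LGlab LGd_below ?r_gt0 //; apply: LG_step_antiparticle_lt_particle => // i i_lt.
have [r_le _] := @LGlab_bounds r.+1 r_lt i i_lt; exact: leq_trans r_gt0 r_le.
Qed.

Section Decreasing.
Variable alpha : seq nat.
Hypothesis B_GMLQ : inGMLQ alpha B.
Hypothesis alpha_decr : forall i, i.+1 < size alpha -> nth 0 alpha i.+1 <= nth 0 alpha i.

Lemma card_Brow_succ r : 0 < r < size B -> #|Brow B r.+1| <= #|Brow B r|.
Proof.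
case: B_GMLQ => size_B card_B /andP[r_gt0 r_lt]; rewrite size_B in r_lt.
rewrite /Brow /= !card_B ?(leq_ltn_trans (leq_pred r) r_lt) //.
by rewrite -{1}(prednK r_gt0) alpha_decr ?prednK.
Qed.

Lemma LGlab_FMlab : forall r, 0 < r <= size B -> forall c, c < n ->
  (isp (Brow B r) c -> LGlab B r c = FMlab B r c) /\
  (~~ isp (Brow B r) c -> LGlab B r c = r.-1).
Proof.
apply: row_ind => [c cn | r r_range IH c cn].
  by rewrite LGlab_top // FMlab_top //; case: ifP.
have r1_range : 0 < r.+1 <= size B by case/andP: r_range.
have LG_FM c' : c' < n -> isp (Brow B r.+1) c' -> LGlab B r.+1 c' = FMlab B r.+1 c'.
  by move=> c'n; have [] := IH c' c'n.
have card_Sr_Sb := card_Brow_succ r_range.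
have w_particle c' : c' < n -> isp (Brow B r.+1) c' -> r < LGlab B r.+1 c'.
  by move=> c'n; have [_] := LGlab_bounds r1_range c'n; apply.
have w_antiparticle c' : c' < n -> ~~ isp (Brow B r.+1) c' -> LGlab B r.+1 c' = r.
  by move=> c'n; have [_] := IH c' c'n; apply.
rewrite /LGlab /FMlab LGd_below // FMd_below // -(eq_FM_step _ _ LG_FM).
split=> [Sc | nSc].
  exact: (LG_step_FM_step_particle n_gt0 card_Sr_Sb w_particle w_antiparticle cn Sc).
exact: (LG_step_FM_step_antiparticle n_gt0 card_Sr_Sb w_particle w_antiparticle cn nSc).
Qed.

End Decreasing.
End Rows.

Theorem lemma3p29 (alpha : seq nat) (n : nat) (B : seq {set 'I_n}) :
  0 < n -> inGMLQ alpha B ->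
  (* (i) *)
  (forall r, 1 <= r <= size alpha ->
     forall j j', j < n -> j' < n ->
       ~~ isp (Brow B r) j -> isp (Brow B r) j' ->
       LGlab B r j < LGlab B r j') /\
  (* (ii) *)
  ((forall i, i.+1 < size alpha -> nth 0 alpha i.+1 <= nth 0 alpha i) ->
     (forall r j, 1 <= r <= size alpha -> j < n -> isp (Brow B r) j ->
        LGlab B r j = FMlab B r j) /\
     (forall r j, 1 <= r <= size alpha -> j < n -> ~~ isp (Brow B r) j ->
        LGlab B r j = r - 1)).
Proof.
move=> n_gt0 B_GMLQ; have size_B : size B = size alpha by case: B_GMLQ.
split=> [r | alpha_decr]; rewrite -size_B.
  by move=> r_range j j' jn j'n; exact: LGlab_antiparticle_lt_particle.
have LG_FM := LGlab_FMlab n_gt0 B_GMLQ alpha_decr.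
split=> r j r_range jn; have [LG_FM_p LG_FM_a] := LG_FM r r_range j jn; first exact: LG_FM_p.
by rewrite subn1; exact: LG_FM_a.
Qed.
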